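(* Let $G$ be a nontrivial graph of order $n$, not isomorphic to $K_n$, such that $\beta_p(G)=n-h$ and $\tau(G)=\tau>\frac{n}{2}$. Let $W$ be its $\tau$-set. Then $n-2h\le\tau\le n-h-1$ if and only if $G[W]\cong K_\tau$.
   Context: All graphs are finite, simple, undirected and connected. Two vertices $u,v$ are twins if $N(u)\setminus\{v\}=N(v)\setminus\{u\}$; the twin number $\tau(G)$ is the maximum cardinality of an equivalence class of the twin relation; a $\tau$-set is a set of pairwise twin vertices of cardinality $\tau(G)$. For a partition $\Pi=\{S_1,\dots,S_k\}$ of $V(G)$, $r(u|\Pi)=(d(u,S_1),\dots,d(u,S_k))$ with $d(u,S)=\min_{w\in S}d(u,w)$; $\Pi$ is locating if $r(u|\Pi)\ne r(v|\Pi)$ for all distinct $u,v$; $\beta_p(G)$ is the minimum size of a locating partition. *)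

(* A graph is a symmetric irreflexive relation e on a finType T. *)
From mathcomp Require Import all_boot.
Set Implicit Arguments. Unset Strict Implicit. Unset Printing Implicit Defensive.

Section Graphs.
Variables (T : finType) (e : rel T).

Definition simple_connected_graph : Prop :=
  [/\ symmetric e, irreflexive e & forall u v : T, connect e u v].

Definition nbhd (u : T) : {set T} := [set v | e u v].

Fixpoint ball (k : nat) (u : T) : {set T} :=
  match k with
  | 0 => [set u]
  | k'.+1 => ball k' u :|: \bigcup_(w in ball k' u) nbhd w
  end.

(* graph distance: least k with v in ball k u (for connected graphs this is < #|T|) *)
Definition dist (u v : T) : nat := find (fun k => v \in ball k u) (iota 0 #|T|).

Definition dist_set (u : T) (S : {set T}) : nat :=
  \big[minn/#|T|]_(w in S) dist u w.

(* locating partition: for distinct u v some class S has d(u,S) <> d(v,S);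
   this is equivalent to r(u|Pi) <> r(v|Pi) for any ordering of the classes *)
Definition locating (P : {set {set T}}) : bool :=
  partition P [set: T] &&
  [forall u, forall v, (u != v) ==> [exists S in P, dist_set u S != dist_set v S]].

Definition beta_p : nat :=
  \big[minn/#|T|]_(P : {set {set T}} | locating P) #|P|.

Definition twin (u v : T) : bool := (nbhd u :\ v) == (nbhd v :\ u).

Definition twin_class (u : T) : {set T} := [set v | twin u v].

Definition twin_number : nat := \max_(u : T) #|twin_class u|.

Definition tau_set (W : {set T}) : Prop :=
  {in W &, forall x y, twin x y} /\ #|W| = twin_number.

(* W induces a complete graph: G[W] is isomorphic to K_|W| *)
Definition clique (W : {set T}) : Prop :=
  {in W &, forall x y, x != y -> e x y}.

Definition complete_graph : Prop := forall u v : T, u != v -> e u v.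

End Graphs.

From mathcomp Require Import all_boot order zify.
Set Implicit Arguments. Unset Strict Implicit. Unset Printing Implicit Defensive.

(* The tau-set W is a twin class, so it is a clique or an independent set, and
   every vertex outside W is adjacent to all of W or to none of it.  As
   tau > n/2, a set Y of vertices outside W can be matched injectively into W
   minus a fixed vertex w0; merging each y in Y with its partner gives a
   partition into n - #|Y| classes, which is locating as soon as each merged
   pair is separated by some class.  If W is independent, take Y to be the
   whole outside: {w0} or another pair separates, so beta_p <= tau.  If W is a
   clique, an Ore-type dominating set Z of at most half of the outside
   vertices, kept as singletons, separates the outside neighbours of W from
   their partners, so 2 beta_p <= n + tau.  Conversely, adjacent twins lie in
   distinct classes and an edge leaving W forces one more class, so
   tau < beta_p. *)

Lemma bigmin_leq (I : finType) (P : pred I) (F : I -> nat) x0 i :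
  P i -> \big[minn/x0]_(j | P j) F j <= F i.
Proof. by rewrite -minEnat => Pi; exact (Order.TotalTheory.bigmin_le_cond x0 F Pi). Qed.

Lemma leq_bigmin (I : finType) (P : pred I) (F : I -> nat) x0 m :
  m <= x0 -> (forall i, P i -> m <= F i) -> m <= \big[minn/x0]_(j | P j) F j.
Proof. by move=> m_x0 m_F; elim/big_ind: _ => // x y; rewrite leq_min => -> ->. Qed.

Lemma exists_inj_into (T : finType) (A B : {set T}) : #|A| <= #|B| ->
  exists f : T -> T, {in A, forall x, f x \in B} /\ {in A &, injective f}.
Proof.
move=> le_AB; have idxB x : x \in A -> index x (enum A) < size (enum B).
  by move=> xA; rewrite -cardE (leq_trans _ le_AB) // cardE index_mem mem_enum.
exists (fun x => nth x (enum B) (index x (enum A))); split=> [x xA | x y xA yA].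
  by rewrite -mem_enum mem_nth ?idxB.
rewrite (set_nth_default y) ?idxB // => /eqP.
rewrite nth_uniq ?enum_uniq ?idxB // => /eqP idx_xy.
by rewrite -(nth_index x (_ : x \in enum A)) ?mem_enum // idx_xy nth_index ?mem_enum.
Qed.

Lemma exists_inj_into_setD1 (T : finType) (A B : {set T}) b :
  b \in B -> A \subset ~: B -> #|A| < #|B| ->
  exists f : T -> T, [/\ {in A &, injective f},
    {in A, forall x, f x \notin A} & {in A, forall x, f x \in B /\ f x != b}].
Proof.
move=> bB sABC cardA; have [|f [fB f_inj]] := exists_inj_into (A := A) (B := B :\ b).
  by rewrite (cardsD1 b B) bB in cardA.
exists f; split => // x xA; last by move: (fB x xA); rewrite !inE => /andP [].
by apply: contraTN (fB x xA) => /(subsetP sABC); rewrite !inE => /negbTE ->; rewrite andbF.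
Qed.

Section Domination.
Variables (T : finType) (U A : {set T}) (R : rel T).
Hypotheses (sAU : A \subset U) (R_irr : irreflexive R).
Hypothesis R_sym : {in A &, forall a b, R a b -> R b a}.
Hypothesis R_wit : {in A, forall a, exists2 z, z \in U & R a z}.

Definition dominates (Z : {set T}) := [forall a in A, (a \in Z) || [exists z in Z, R a z]].

Lemma dominates_setD (Z : {set T}) : Z \subset U -> dominates Z ->
  (forall Z' : {set T}, Z' \subset U -> dominates Z' -> #|Z| <= #|Z'|) ->
  dominates (U :\: Z).
Proof.
move=> sZU /forall_inP domZ minZ; apply/forall_inP => a aA.
have aU : a \in U by apply: (subsetP sAU).
case: (boolP (a \in Z)) => aZ; last by rewrite inE aZ aU.
case: (boolP [exists z in U :\: Z, R a z]) => [Ra | /exists_inPn noR]; first by apply/orP; right.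
suff /(minZ _ (subset_trans (subD1set Z a) sZU)) : dominates (Z :\ a).
  by rewrite (cardsD1 a Z) aZ add1n ltnn.
apply/forall_inP => b bA; have [-> | ba] := eqVneq b a.
  have [z zU Raz] := R_wit aA.
  have zZ : z \in Z by apply: contraTT Raz => zZ; apply: noR; rewrite inE zZ.
  apply/orP; right; apply/exists_inP; exists z => //.
  by rewrite !inE zZ andbT; apply: contraTneq Raz => ->; rewrite R_irr.
case: (boolP (b \in Z)) => bZ; first by rewrite !inE ba bZ.
have /exists_inP [z zZ Rbz] : [exists z in Z, R b z] by move: (domZ b bA); rewrite (negbTE bZ).
have [za | za] := eqVneq z a.
  by move: Rbz; rewrite za => /(R_sym bA aA); rewrite (negbTE (noR b _)) // inE bZ (subsetP sAU).
by apply/orP; right; apply/exists_inP; exists z; rewrite // !inE za.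
Qed.

Lemma exists_half_dominating :
  exists Z : {set T}, [/\ Z \subset U, 2 * #|Z| <= #|U| & dominates Z].
Proof.
pose domU (Z : {set T}) := (Z \subset U) && dominates Z.
have domUU : domU U by rewrite /domU subxx; apply/forall_inP => a aA; rewrite (subsetP sAU).
case: (arg_minnP (fun Z : {set T} => #|Z|) domUU) => Z /andP [sZU domZ] minZ.
have minZ' (Z' : {set T}) : Z' \subset U -> dominates Z' -> #|Z| <= #|Z'|.
  by move=> sZ'U domZ'; apply: minZ; apply/andP.
have /minZ' := dominates_setD sZU domZ minZ'.
rewrite cardsD (setIidPr sZU) subsetDl => /(_ isT).
by exists Z; split=> //; have := subset_leq_card sZU; lia.
Qed.

End Domination.

Section Distances.
Variables (T : finType) (e : rel T).
Hypothesis card_gt1 : 1 < #|T|.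

Let iota_card : exists s, iota 0 #|T| = [:: 0, 1 & s].
Proof. by case: #|T| card_gt1 => [|[|k]] // _; exists (iota 2 k). Qed.

Lemma ball1 u v : (v \in ball e 1 u) = (v == u) || e u v.
Proof. by rewrite /= big_set1 !inE. Qed.

Lemma dist_refl u : dist e u u = 0.
Proof. by rewrite /dist; have [s ->] := iota_card; rewrite /= inE eqxx. Qed.

Lemma dist_gt0 u v : u != v -> 0 < dist e u v.
Proof.
by move=> uv; rewrite /dist; have [s ->] := iota_card; rewrite /= inE eq_sym (negbTE uv).
Qed.

Lemma dist_eq1 u v : u != v -> (dist e u v == 1) = e u v.
Proof.
rewrite eq_sym => /negbTE vu; rewrite /dist; have [s ->] := iota_card.
by rewrite /= big_set1 !inE vu; case: (e u v).
Qed.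

Lemma dist_gt1 u v : u != v -> ~~ e u v -> 1 < dist e u v.
Proof.
move=> uv /negbTE nuv; have := dist_gt0 uv; have := dist_eq1 uv.
by rewrite nuv; case: (dist e u v) => [|[]].
Qed.

Lemma dist_set_mem u (S : {set T}) : u \in S -> dist_set e u S = 0.
Proof. by move=> uS; apply/eqP; rewrite -leqn0 -(dist_refl u); exact: bigmin_leq. Qed.

Lemma dist_set_gt0 u (S : {set T}) : u \notin S -> 0 < dist_set e u S.
Proof.
move=> uS; apply: leq_bigmin; first lia.
by move=> s sS; apply: dist_gt0; apply: contraNneq uS => ->.
Qed.

Lemma dist_set_eq1 u (S : {set T}) :
  u \notin S -> (dist_set e u S == 1) = [exists s in S, e u s].
Proof.
move=> uS; have neq_us s : s \in S -> u != s by move=> sS; apply: contraNneq uS => ->.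
case: (boolP [exists s in S, e u s]) => [/exists_inP [s sS eus] | /exists_inPn noe].
  rewrite eqn_leq dist_set_gt0 // andbT; have := dist_eq1 (neq_us s sS).
  by rewrite eus => /eqP <-; exact: bigmin_leq.
suff /gtn_eqF -> : 1 < dist_set e u S by [].
by apply: leq_bigmin => // s sS; apply: dist_gt1; [exact: neq_us | exact: noe].
Qed.

Lemma dist_set_neq u v (S : {set T}) : u \notin S -> v \notin S ->
  [exists s in S, e u s] != [exists s in S, e v s] -> dist_set e u S != dist_set e v S.
Proof. by move=> uS vS; rewrite -dist_set_eq1 // -dist_set_eq1 //; apply: contra => /eqP ->. Qed.

Lemma dist_set1_neq u v s : u != s -> v != s -> e u s != e v s ->
  dist_set e u [set s] != dist_set e v [set s].
Proof.
move=> us vs neq; apply: dist_set_neq; rewrite ?inE //.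
suff ex1 x : [exists y in [set s], e x y] = e x s by rewrite !ex1.
by apply/exists_inP/idP => [[y /set1P -> //] | ?]; exists s; rewrite ?inE.
Qed.

Lemma dist_set2_neq u v s t : u \notin [set s; t] -> v \notin [set s; t] ->
  (e u s || e u t) != (e v s || e v t) ->
  dist_set e u [set s; t] != dist_set e v [set s; t].
Proof.
move=> uS vS neq; apply: dist_set_neq => //.
suff ex2 x : [exists y in [set s; t], e x y] = e x s || e x t by rewrite !ex2.
apply/exists_inP/orP => [[y /set2P [] -> ] | [] ?]; [left | right | exists s | exists t];
  by rewrite ?inE ?eqxx ?orbT.
Qed.

End Distances.

Section Twins.
Variables (T : finType) (e : rel T).
Hypotheses (e_sym : symmetric e) (e_irr : irreflexive e).

Lemma twin_adj u v z : twin e u v -> z != u -> z != v -> e u z = e v z.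
Proof. by move=> /eqP/setP/(_ z); rewrite !inE => + /negbTE zu /negbTE zv; rewrite zu zv. Qed.

Lemma not_twin_witness u v : ~~ twin e u v ->
  exists z, [/\ z != u, z != v & e u z != e v z].
Proof.
case: (boolP [exists z, [&& z != u, z != v & e u z != e v z]]).
  by case/existsP => z /and3P [zu zv euz]; exists z.
move=> /existsPn noz /negP[]; apply/eqP/setP => z; rewrite !inE.
have [-> | zu] := eqVneq z u; first by rewrite e_irr andbF.
have [-> | zv] := eqVneq z v; first by rewrite e_irr andbF.
by have := noz z; rewrite zu zv /= negbK => /eqP.
Qed.

Lemma ballS k u : ball e k.+1 u = ball e k u :|: \bigcup_(w in ball e k u) nbhd e w.
Proof. by []. Qed.

Lemma ball_twin u v k : twin e u v -> e u v -> ball e k.+1 u = ball e k.+1 v.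
Proof.
move=> tw euv; elim: k => [|k IH]; last by rewrite ballS [in RHS]ballS IH.
apply/setP => z; rewrite !ball1.
have [-> | zu] := eqVneq z u; first by rewrite e_sym euv orbT.
have [-> | zv] := eqVneq z v; first by rewrite euv.
by rewrite (twin_adj tw zu zv).
Qed.

Lemma dist_twin u v z : twin e u v -> e u v -> z != u -> z != v ->
  dist e u z = dist e v z.
Proof.
move=> tw euv zu zv; apply: eq_find => -[|k]; last by rewrite (ball_twin k tw euv).
by rewrite /= !inE (negbTE zu) (negbTE zv).
Qed.

End Twins.

Section Locating.
Variables (T : finType) (e : rel T).
Hypothesis card_gt1 : 1 < #|T|.

Lemma beta_p_le (P : {set {set T}}) : locating e P -> beta_p e <= #|P|.
Proof. exact: bigmin_leq. Qed.

Lemma beta_p_gt k : k < #|T| -> (forall P, locating e P -> k < #|P|) -> k < beta_p e.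
Proof. exact: leq_bigmin. Qed.

Lemma locating_pblock_neq (P : {set {set T}}) u v : locating e P -> u != v ->
  {in P, forall S : {set T}, u \notin S -> v \notin S -> dist_set e u S = dist_set e v S} ->
  pblock P u != pblock P v.
Proof.
case/andP => /and3P [/eqP covP trivP _] /forallP locP uv same; apply/eqP => puv.
have mem_pb x : x \in pblock P x by rewrite mem_pblock covP inE.
have /existsP [S /andP [SP dS]] := implyP (forallP (locP u) v) uv.
case: (boolP (u \in S)) => uS.
  have vS : v \in S by rewrite -(def_pblock trivP SP uS) puv mem_pb.
  by rewrite (dist_set_mem _ card_gt1 uS) (dist_set_mem _ card_gt1 vS) eqxx in dS.
case: (boolP (v \in S)) => vS.
  by move: uS; rewrite -(def_pblock trivP SP vS) -puv mem_pb.
by rewrite same ?eqxx in dS.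
Qed.

Section Merge.
Variables (Y : {set T}) (f : T -> T).
Hypotheses (f_inj : {in Y &, injective f}) (f_out : {in Y, forall y, f y \notin Y}).

(* The classes of the preimage partition of merge are the pairs {y, f y}, y in Y,
   and singletons. *)
Definition merge v := if v \in Y then f v else v.

Definition merge_class s := [set v | merge v == merge s].

Lemma merge_class_in y : y \in Y -> merge_class y = [set y; f y].
Proof.
move=> yY; apply/setP => v; rewrite !inE /merge yY.
case: ifP => vY; last by rewrite (_ : v == y = false) //; apply: contraFF vY => /eqP ->.
rewrite (inj_in_eq f_inj) // (_ : v == f y = false) ?orbF //.
by apply: contraTF vY => /eqP ->; exact: f_out.
Qed.

Lemma merge_class_out s : s \notin Y -> {in Y, forall y, f y != s} ->
  merge_class s = [set s].
Proof.
move=> sY fs; apply/setP => v; rewrite !inE /merge (negbTE sY).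
case: ifP => // vY; rewrite (negbTE (fs v vY)); apply/esym/negbTE.
by apply: contraNneq sY => <-.
Qed.

Lemma beta_p_merge :
  (forall y, y \in Y -> exists s,
     dist_set e y (merge_class s) != dist_set e (f y) (merge_class s)) ->
  beta_p e + #|Y| <= #|T|.
Proof.
move=> sep; set P := preim_partition merge [set: T].
have classP s : merge_class s \in P.
  by apply/imsetP; exists s; rewrite ?inE //; apply/setP => v; rewrite !inE eq_sym.
have locP : locating e P.
  rewrite /locating preim_partitionP; apply/forallP => u; apply/forallP => v.
  apply/implyP => uv; have [muv | muv] := eqVneq (merge u) (merge v); last first.
    apply/existsP; exists (merge_class u); rewrite classP (dist_set_mem _ card_gt1) ?inE //.
    by rewrite eq_sym -lt0n dist_set_gt0 // inE eq_sym.
  move: muv; rewrite /merge; case uY: (u \in Y); case vY: (v \in Y) => muv.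
  - by rewrite (f_inj uY vY muv) eqxx in uv.
  - have [s ds] := sep u uY; apply/existsP; exists (merge_class s).
    by rewrite classP -muv.
  - have [s ds] := sep v vY; apply/existsP; exists (merge_class s).
    by rewrite classP muv eq_sym.
  - by rewrite muv eqxx in uv.
have card_image : #|merge @: [set: T]| <= #|~: Y|.
  apply/subset_leq_card/subsetP => _ /imsetP [v _ ->]; rewrite inE /merge.
  by case: ifP => [/f_out | ->].
have card_P : #|P| <= #|merge @: [set: T]|.
  rewrite /P /preim_partition /equivalence_partition.
  rewrite (imset_comp (fun c => [set y in [set: T] | c == merge y]) merge).
  exact: leq_imset_card.
rewrite -(cardsC Y) addnC leq_add2l.
exact: leq_trans (beta_p_le locP) (leq_trans card_P card_image).
Qed.

End Merge.

End Locating.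

Lemma connected_edge_out (T : finType) (e : rel T) (A : {set T}) x y :
  symmetric e -> (forall u v, connect e u v) -> x \in A -> y \notin A ->
  exists w a, [/\ w \in A, a \notin A & e w a].
Proof.
move=> e_sym conn xA yA.
case: (boolP [exists w in A, exists a in ~: A, e w a]).
  by case/exists_inP => w wA /exists_inP [a]; rewrite inE => aA ewa; exists w, a.
move=> /exists_inPn noedge; suff closedA : closed e A.
  by move: yA; rewrite -(closed_connect closedA (conn x y)) xA.
move=> u v euv; apply/idP/idP => [uA | vA]; apply/negPn/negP => notA.
  by move: (noedge u uA) => /exists_inPn /(_ v); rewrite inE notA euv => /(_ isT).
by move: (noedge v vA) => /exists_inPn /(_ u); rewrite inE notA e_sym euv => /(_ isT).
Qed.

Section TwinSet.
Variables (T : finType) (e : rel T) (W : {set T}).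
Hypotheses (e_sym : symmetric e) (e_irr : irreflexive e) (card_gt1 : 1 < #|T|).
Hypothesis W_twins : {in W &, forall x y, twin e x y}.

Lemma twin_set_adj w w' z : w \in W -> w' \in W -> z \notin W -> e w z = e w' z.
Proof.
move=> wW w'W zW; have [-> // | _] := eqVneq w w'.
by apply: (twin_adj (W_twins wW w'W)); apply: contraNneq zW => ->.
Qed.

Lemma twin_set_edge_eq u v p q : u \in W -> v \in W -> p \in W -> q \in W ->
  u != v -> p != q -> e u v = e p q.
Proof.
have step a b c : a \in W -> b \in W -> c \in W -> a != b -> a != c -> e a b = e a c.
  move=> aW bW cW ab ac; have [-> // | bc] := eqVneq b c.
  by rewrite e_sym [e a c]e_sym (twin_adj (W_twins bW cW)) // eq_sym.
move=> uW vW pW qW uv pq; have [up | up] := eqVneq u p; first by subst p; apply: step.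
by rewrite (step u v p) // e_sym (step p u q) // eq_sym.
Qed.

Lemma twin_set_clique_or_stable :
  clique e W \/ {in W &, forall p q, p != q -> ~~ e p q}.
Proof.
case: (boolP [exists u in W, exists v in W, (u != v) && e u v]).
  case/exists_inP => u uW /exists_inP [v vW /andP [uv euv]]; left.
  by move=> p q pW qW pq; rewrite -(twin_set_edge_eq uW vW pW qW uv pq).
move=> /exists_inPn noedge; right => p q pW qW pq; apply: contraNN (noedge p pW) => epq.
by apply/exists_inP; exists q; rewrite ?pq.
Qed.

Lemma clique_twin_set_lt_locating (P : {set {set T}}) w a :
  clique e W -> w \in W -> a \notin W -> e w a -> locating e P -> #|W| < #|P|.
Proof.
move=> clW wW aW ewa locP; have /andP [/and3P [/eqP covP trivP _] _] := locP.
have mem_pb x : x \in pblock P x by rewrite mem_pblock covP inE.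
have pb_inj : {in W &, injective (pblock P)}.
  move=> u v uW vW; apply: contra_eq => uv.
  apply: (locating_pblock_neq card_gt1 locP uv) => S _ uS vS.
  apply: eq_bigr => z zS; apply: dist_twin; rewrite ?W_twins ?clW //.
    by apply: contraNneq uS => <-.
  by apply: contraNneq vS => <-.
(* With exactly #|W| classes, the class of a holds a vertex w' of W and every
   other class holds a common neighbour of a and w'. *)
rewrite ltnNge; apply/negP => cardP.
have blocksW : pblock P @: W = P.
  apply/eqP; rewrite eqEcard (card_in_imset pb_inj) cardP andbT.
  by apply/subsetP => _ /imsetP [x _ ->]; rewrite pblock_mem // covP inE.
have /imsetP [w' w'W paw'] : pblock P a \in pblock P @: W by rewrite blocksW pblock_mem ?covP.
have aw' : a != w' by apply: contraNneq aW => ->.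
suff : pblock P a != pblock P w' by rewrite paw' eqxx.
apply: (locating_pblock_neq card_gt1 locP aw'); rewrite -blocksW => _ /imsetP [x xW ->] aS w'S.
have adj_x y : y \notin pblock P x -> e y x -> dist_set e y (pblock P x) = 1.
  by move=> yS eyx; apply/eqP; rewrite dist_set_eq1 //; apply/exists_inP; exists x.
rewrite adj_x ?adj_x //; last by rewrite e_sym (twin_set_adj xW wW aW).
by apply: clW => //; apply: contraNneq w'S => ->.
Qed.

Lemma clique_twin_set_lt_beta_p w a :
  clique e W -> w \in W -> a \notin W -> e w a -> #|W| < beta_p e.
Proof.
move=> clW wW aW ewa; apply: beta_p_gt => [|P].
  by rewrite -(cardsC W) -addn1 leq_add2l; apply/card_gt0P; exists a; rewrite inE.
exact: (clique_twin_set_lt_locating clW wW aW ewa).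
Qed.

Section TauSet.
Hypothesis W_max : #|W| = twin_number e.
Hypothesis W_large : #|T| < 2 * #|W|.

Lemma tau_set_not_twin w x : w \in W -> x \notin W -> ~~ twin e w x.
Proof.
move=> wW xW; apply/negP => twx.
have /subset_leq_card : x |: W \subset twin_class e w.
  apply/subsetP => y; rewrite !inE => /predU1P [-> // | yW]; exact: W_twins.
rewrite cardsU1 xW W_max ltnNge.
by rewrite (leq_bigmax_cond (F := fun u => #|twin_class e u|)).
Qed.

Lemma stable_tau_set_beta_p_le :
  {in W &, forall p q, p != q -> ~~ e p q} -> beta_p e <= #|W|.
Proof.
move=> stW; have /card_gt0P [w0 w0W] : 0 < #|W| by lia.
have cardWC : #|~: W| < #|W| by have := cardsC W; lia.
have [f [f_inj f_out fW]] := exists_inj_into_setD1 w0W (subxx _) cardWC.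
suff : beta_p e + #|~: W| <= #|T| by have := cardsC W; lia.
apply: (beta_p_merge card_gt1 f_inj f_out) => x xWC.
have [fxW fx_w0] := fW x xWC; have xW : x \notin W by rewrite inE in xWC.
case ew0x : (e w0 x).
  exists w0; rewrite merge_class_out ?inE ?negbK //; last by move=> y /fW [].
  apply: dist_set1_neq => //; first by apply: contraNneq xW => ->.
  by rewrite e_sym ew0x (negbTE (stW _ _ fxW w0W fx_w0)).
have [y [yfx yx eyx]] := not_twin_witness e_irr (tau_set_not_twin fxW xW).
have yWC : y \in ~: W.
  rewrite inE; apply: contraNN eyx => yW.
  rewrite [e x y]e_sym (twin_set_adj yW w0W xW) ew0x.
  by rewrite (negbTE (stW _ _ fxW yW _)) // eq_sym.
have [fyW _] := fW y yWC.
have fx_fy : f x != f y by apply: contra_neq yx => /(f_inj _ _ xWC yWC) ->.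
exists y; rewrite merge_class_in //; apply: (dist_set2_neq card_gt1).
- rewrite !inE negb_or eq_sym yx /=; by apply: contraNneq xW => ->.
- by rewrite !inE negb_or eq_sym yfx.
- rewrite [e x (f y)]e_sym (twin_set_adj fyW w0W xW) ew0x.
  by rewrite (negbTE (stW _ _ fxW fyW fx_fy)) !orbF eq_sym.
Qed.

Lemma clique_tau_set_beta_p_le w0 : clique e W -> w0 \in W ->
  exists Z : {set T}, 2 * #|Z| <= #|T| - #|W| /\ beta_p e <= #|W| + #|Z|.
Proof.
move=> clW w0W.
pose A := [set a in ~: W | e w0 a].
(* R a z: the singleton {z} separates a from the vertices of W. *)
pose R := [rel a z | (a != z) && (e a z != e w0 z)].
have sAWC : A \subset ~: W by apply/subsetP => a; rewrite inE => /andP [].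
have R_irr : irreflexive R by move=> a; rewrite /= eqxx.
have R_sym : {in A &, forall a b, R a b -> R b a}.
  move=> a b; rewrite !inE => /andP [_ ea] /andP [_ eb] /= /andP [ab].
  by rewrite ea eb e_sym [b == a]eq_sym ab.
have R_wit : {in A, forall a, exists2 z, z \in ~: W & R a z}.
  move=> a; rewrite !inE => /andP [aW ea].
  have [z [zw0 za ez]] := not_twin_witness e_irr (tau_set_not_twin w0W aW).
  have zW : z \notin W.
    apply: contraNN ez => zW; rewrite [e a z]e_sym (twin_set_adj zW w0W aW) ea.
    by rewrite (clW _ _ w0W zW) // eq_sym.
  by exists z; rewrite ?inE // /= eq_sym za; rewrite eq_sym in ez.
have [Z [sZWC cardZ domZ]] := exists_half_dominating sAWC R_irr R_sym R_wit.
have cardWC := cardsC W.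
exists Z; split; first by lia.
pose Y := ~: W :\: Z.
have cardYZ : #|Y| + #|Z| = #|~: W|.
  by rewrite cardsD (setIidPr sZWC) subnK // subset_leq_card.
have cardY : #|Y| < #|W| by lia.
have [f [f_inj f_out fW]] := exists_inj_into_setD1 w0W (subsetDl _ _) cardY.
suff : beta_p e + #|Y| <= #|T| by lia.
apply: (beta_p_merge card_gt1 f_inj f_out) => x xY.
have [fxW fx_w0] := fW x xY; move: xY; rewrite !inE => /andP [xZ xW].
case: (boolP (x \in A)) => xA.
  have /exists_inP [z zZ /andP [xz exz]] : [exists z in Z, R x z].
    by have := forall_inP domZ x xA; rewrite (negbTE xZ).
  have zW : z \notin W by have := subsetP sZWC z zZ; rewrite inE.
  exists z; rewrite merge_class_out ?inE ?zZ //; last first.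
    by move=> y /fW [fyW _]; apply: contraNneq zW => <-.
  apply: dist_set1_neq; rewrite // ?(twin_set_adj fxW w0W zW) //.
  by apply: contraNneq zW => <-.
exists w0; rewrite merge_class_out ?inE ?w0W ?andbF //; last by move=> y /fW [].
apply: dist_set1_neq => //; first by apply: contraNneq xW => ->.
by rewrite (clW _ _ fxW w0W fx_w0) e_sym; move: xA; rewrite !inE xW; case: (e w0 x).
Qed.

End TauSet.

End TwinSet.

Theorem corollary19 (T : finType) (e : rel T) (h tau : nat) (W : {set T}) :
  simple_connected_graph e ->
  1 < #|T| ->
  ~ complete_graph e ->
  beta_p e + h = #|T| ->
  twin_number e = tau ->
  #|T| < 2 * tau ->
  tau_set e W ->
  ((#|T| <= tau + 2 * h /\ tau + h + 1 <= #|T|) <-> clique e W).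
Proof.
move=> [e_sym e_irr conn] card_gt1 not_complete beta_h <- W_large [W_twins W_max].
rewrite -W_max in W_large *; split.
  case=> _ tau_lt_beta.
  have [// | stW] := twin_set_clique_or_stable e_sym W_twins.
  by have := stable_tau_set_beta_p_le e_sym e_irr card_gt1 W_twins W_max W_large stW; lia.
move=> clW; have /card_gt0P [w0 w0W] : 0 < #|W| by lia.
have [x xW] : exists x, x \notin W.
  case: (pickP [predC W]) => [x /= xW | allW]; first by exists x.
  have inW y : y \in W by apply/negPn/negbT/allW.
  by case: not_complete => u v uv; apply: clW; rewrite ?inW.
have [w [a [wW aW ewa]]] := connected_edge_out e_sym conn w0W xW.
have := clique_twin_set_lt_beta_p e_sym card_gt1 W_twins clW wW aW ewa.
have [Z [cardZ beta_le]] :=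
  clique_tau_set_beta_p_le e_sym e_irr card_gt1 W_twins W_max W_large clW w0W.
lia.
Qed.
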